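(* Let $\sigma>0$, let $\mu_1,\ldots,\mu_n\in[0,1]$, and let $\mathcal{X}=\{x_1,\ldots,x_n\}\subseteq\mathbb{R}$ with $x_i=\mu_i+g_i$, where $g_1,\ldots,g_n$ are independent Gaussian random variables with mean $0$ and standard deviation $\sigma$. Then for every $\varepsilon>0$, the probability that $\mathcal{X}$ is not $\varepsilon$-spreaded is at most $\frac{2n^4\varepsilon^2}{\sigma^2}$.
   Context: $\mathcal{X}$ is $\varepsilon$-spreaded if (1) no interval of length $\varepsilon$ contains three or more points of $\mathcal{X}$, and (2) for any four points $x_1,x_2,x_3,x_4\in\mathcal{X}$, which are distinct except that $x_2$ and $x_3$ may be the same point, we have $|x_1-x_2|>\varepsilon$ or $|x_3-x_4|>\varepsilon$. *)

From HB Require Import structures.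
From mathcomp Require Import all_boot all_order all_algebra.
From mathcomp Require Import all_classical all_reals all_analysis.
Set Implicit Arguments. Unset Strict Implicit. Unset Printing Implicit Defensive.
Import Order.TTheory GRing.Theory Num.Theory.
Local Open Scope classical_set_scope.
Local Open Scope ring_scope.

Definition spreaded {R : realType} (eps : R) (X : set R) : Prop :=
  (forall a : R, ~ (exists x y z : R,
       [/\ X x, X y & X z] /\ [/\ x != y, x != z & y != z] /\
       [/\ a <= x <= a + eps, a <= y <= a + eps & a <= z <= a + eps]))
  /\
  (forall x1 x2 x3 x4 : R, X x1 -> X x2 -> X x3 -> X x4 ->
     x1 != x2 -> x1 != x3 -> x1 != x4 -> x2 != x4 -> x3 != x4 ->
     eps < `|x1 - x2| \/ eps < `|x3 - x4|).

Definition mutually_independent {d : measure_display} {T : measurableType d}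
  {R : realType} (P : probability T R) (n : nat) (g : 'I_n -> T -> R) : Prop :=
  forall (J : {set 'I_n}) (A : 'I_n -> set R),
    (forall i, measurable (A i)) ->
    P (\bigcap_(i in [set i | i \in J]) (g i @^-1` A i)) =
    (\prod_(i in J) P (g i @^-1` A i))%E.

From HB Require Import structures.
From mathcomp Require Import all_boot all_order all_algebra.
From mathcomp Require Import all_classical all_reals all_analysis.
From mathcomp Require Import measurable_realfun.
From mathcomp Require Import ring lra.
Import Order.TTheory GRing.Theory Num.Theory.
Local Open Scope classical_set_scope.
Local Open Scope ring_scope.

(* A configuration fails to be eps-spreaded exactly when some four points,
   distinct as in condition (2), form two eps-close pairs (x1, x2), (x3, x4)
   (three points in a short interval give (x, y, y, z)).  A union bound over
   the n^4 index patterns reduces the theorem to bounding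
   P(|X_i - X_j| <= eps, |X_k - X_l| <= eps) by (c (dl + 2 eps))^2 for
   independent X with densities bounded by c.  Since i differs from k and l,
   this follows by conditioning on the cell of a grid of width dl containing
   X_k, which confines X_l to an interval of length dl + 2 eps, and then on
   the cell containing X_j, which does the same for X_i.  For Gaussians
   c = 1 / (sigma sqrt(2 pi)), and dl = eps / 2 gives the constant 2. *)

Definition clustered {R : realType} (eps y1 y2 y3 y4 : R) : bool :=
  [&& y1 != y2, y1 != y3, y1 != y4, y2 != y4, y3 != y4,
      `|y1 - y2| <= eps & `|y3 - y4| <= eps].

Lemma not_spreadedP {R : realType} (eps : R) (A : set R) :
  ~ spreaded eps A <->
  exists y1 y2 y3 y4, [/\ A y1, A y2, A y3 & A y4] /\ clustered eps y1 y2 y3 y4.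
Proof.
split=> [|[y1 [y2 [y3 [y4 [[A1 A2 A3 A4]]]]]]]; last first.
  case/and5P=> n12 n13 n14 n24 /and3P[n34 d12 d34] [_ /(_ y1 y2 y3 y4)].
  by case/(_ A1 A2 A3 A4 n12 n13 n14 n24 n34) => ?; [move: d12|move: d34];
    rewrite leNgt => /negP.
move=> nsp; apply: contrapT => nclu; apply: nsp; split.
- move=> a [x [y [z [[Ax Ay Az] [[nxy nxz nyz]
    [/andP[ax xa] /andP[ay ya] /andP[az za]]]]]]].
  apply: nclu; exists x, y, y, z; split=> //.
  rewrite /clustered nxy nxz nyz !ler_norml /=.
  by apply/andP; split; apply/andP; split; lra.
- move=> y1 y2 y3 y4 A1 A2 A3 A4 n12 n13 n14 n24 n34.
  rewrite !ltNge; apply/orP; rewrite -negb_and; apply/negP => /andP[d12 d34].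
  apply: nclu; exists y1, y2, y3, y4; split=> //.
  by rewrite /clustered n12 n13 n14 n24 n34 d12 d34.
Qed.

Lemma measure_le_partition {d : measure_display} {T : measurableType d}
    {R : realType} (mu : {measure set T -> \bar R}) (S F : nat -> set T)
    (E H : set T) (C : R) :
  (forall k, measurable (S k)) -> trivIset setT S ->
  (forall k, measurable (F k)) -> measurable E -> measurable H -> 0 <= C ->
  E `<=` \bigcup_k F k ->
  (forall k, (mu (F k) <= C%:E * mu (S k `&` H))%E) ->
  (mu E <= C%:E * mu H)%E.
Proof.
move=> mS tS mF mE mH C0 EF muF.
have mSH k : measurable (S k `&` H) by exact: measurableI.
have tSH : trivIset setT (fun k => S k `&` H).
  by move=> i j _ _ [w [[Siw _] [Sjw _]]]; apply: (tS i j) => //; exists w.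
apply: le_trans (measure_sigma_subadditive mu mF mE EF) _.
apply: (@le_trans _ _ (\sum_(0 <= k <oo) (C%:E * mu (S k `&` H)))%E).
  by apply: lee_nneseries => // *; exact: measure_ge0.
rewrite nneseriesZl; last by move=> *; exact: measure_ge0.
rewrite -(measure_semi_bigcup mu mSH tSH) ?lee_wpmul2l ?lee_fin //.
  apply: le_measure; rewrite ?inE //; first exact: bigcupT_measurable.
  by move=> w [k _ []].
exact: bigcupT_measurable.
Qed.

Lemma measure_fin_bigcup_le {d : measure_display} {T : measurableType d}
    {R : realType} (mu : {measure set T -> \bar R}) (I : finType)
    (F : I -> set T) (b : R) :
  (forall i, measurable (F i)) -> (forall i, (mu (F i) <= b%:E)%E) ->
  (mu (\bigcup_i F i) <= (#|I|%:R * b)%:E)%E.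
Proof.
move=> mF muF; apply: le_trans.
  apply: (content_sub_fsum mu (D := setT) finite_finset (fun i _ => mF i)) => //.
  by apply: fin_bigcup_measurable => // i _; exact: mF.
apply: le_trans; first by apply: lee_fsum finite_finset _ => i _; exact: muF.
rewrite fsumEFin; last exact: finite_finset.
rewrite (fsbigE (enum [set: I]%SET)) ?enum_uniq //; last first.
  by move=> i _; rewrite mem_enum inE.
rewrite (eq_bigl xpredT) => [|i]; last exact: in_setT.
by rewrite big_enum sumr_const cardsT mulr_natl.
Qed.

Section grid.
Context {R : realType} (dl : R).
Hypothesis dl_gt0 : 0 < dl.

(* The cells [z dl, (z + 1) dl[, z : int, enumerated through [pickle]; indices
   outside the range of [pickle] give empty cells. *)
Definition grid_cell (k : nat) : set R :=
  if pickle_inv k is Some z then `[z%:~R * dl, (z + 1)%:~R * dl[ else set0.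

Definition grid_nbhd (r : R) (k : nat) : set R :=
  if pickle_inv k is Some z then `[z%:~R * dl - r, (z + 1)%:~R * dl + r]
  else set0.

Lemma measurable_grid_cell k : measurable (grid_cell k).
Proof. by rewrite /grid_cell; case: pickle_inv. Qed.

Lemma measurable_grid_nbhd r k : measurable (grid_nbhd r k).
Proof. by rewrite /grid_nbhd; case: pickle_inv. Qed.

Lemma grid_cell_cover y : exists k, grid_cell k y.
Proof.
exists (pickle (Num.floor (y / dl))); rewrite /grid_cell pickleK_inv /= in_itv /=.
by rewrite -ler_pdivlMr // -ltr_pdivrMr // floor_itv.
Qed.

Lemma trivIset_grid_cell : trivIset setT grid_cell.
Proof.
move=> k k' _ _ [y [+ +]]; rewrite /grid_cell.
have := @pickle_invK int k; have := @pickle_invK int k'.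
case: (pickle_inv k) => [z|] //=; case: (pickle_inv k') => [z'|] //= <- <-.
rewrite !in_itv /= -!ler_pdivlMr // -!ltr_pdivrMr // !intrD1.
move=> /andP[zy yz] /andP[z'y yz']; congr pickle; apply/eqP; rewrite eq_le.
by rewrite -!ltzD1 -!(ltr_int R) !intrD1 (le_lt_trans zy yz') (le_lt_trans z'y yz).
Qed.

Lemma grid_nbhdP r k y y' :
  grid_cell k y -> `|y' - y| <= r -> grid_nbhd r k y'.
Proof.
rewrite /grid_cell /grid_nbhd; case: pickle_inv => [z|] //=.
rewrite !in_itv /= ler_norml => /andP[zy yz] /andP[ly yr].
apply/andP; split; lra.
Qed.

End grid.

Section independent_variables.
Context {R : realType} {d : measure_display} {T : measurableType d}
  (P : probability T R) {n : nat} (X : 'I_n -> T -> R).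

Definition box (A : 'I_n -> set R) : set T := \bigcap_i (X i @^-1` A i).

Lemma box_setT : box (fun=> setT) = setT.
Proof. exact/seteqP. Qed.

Lemma box_with_setI A j B :
  box (fun i => if i == j then A j `&` B else A i) = X j @^-1` B `&` box A.
Proof.
apply/seteqP; split=> w.
- move=> Aw; have := Aw j I; rewrite /= eqxx => -[_ Bw]; split=> // i _.
  by have := Aw i I; rewrite /=; case: eqP => [->[]|].
- by move=> [Bw Aw] i _ /=; case: eqP => [->|_]; [split|]; try exact: Aw.
Qed.

Hypothesis mX : forall i, measurable_fun setT (X i).

Lemma measurable_preimage i A : measurable A -> measurable (X i @^-1` A).
Proof. by move=> mA; rewrite -[X in measurable X]setTI; exact: mX. Qed.

Lemma measurable_box A : (forall i, measurable (A i)) -> measurable (box A).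
Proof.
by move=> mA; apply: fin_bigcap_measurable => // i _; exact: measurable_preimage.
Qed.

Hypothesis indepX : mutually_independent P X.

Lemma box_prob A : (forall i, measurable (A i)) ->
  P (box A) = (\prod_i P (X i @^-1` A i))%E.
Proof.
move=> mA; have := indepX [set: 'I_n]%SET A mA.
rewrite (eq_bigl xpredT) => [<-|i]; last by rewrite inE.
by congr (P _); apply/seteqP; split=> w Aw i _; apply: Aw; rewrite //= inE.
Qed.

Lemma box_prob_with A e B : (forall i, measurable (A i)) -> measurable B ->
  A e = setT ->
  P (box (fun i => if i == e then B else A i)) = (P (X e @^-1` B) * P (box A))%E.
Proof.
move=> mA mB Ae; have mAB i : measurable (if i == e then B else A i).
  by rewrite /=; case: eqP.
rewrite !box_prob // (bigD1 e) //= eqxx [in RHS](bigD1 e) //= Ae.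
rewrite [P (X e @^-1` setT)]probability_setT mul1e; congr (_ * _)%E.
by apply: eq_bigr => i /negPf /= ->.
Qed.

Variable c : R.
Hypothesis density_le : forall i a b, a <= b ->
  (P (X i @^-1` `[a, b]) <= (c * (b - a))%:E)%E.

Variables eps dl : R.
Hypotheses (eps_gt0 : 0 < eps) (dl_gt0 : 0 < dl).

Let close u v := [set w | `|X u w - X v w| <= eps].
Let L := c * (dl + eps *+ 2).

Lemma measurable_close u v : measurable (close u v).
Proof.
rewrite /close -[X in measurable X]setTI -(preimage_true (fun w => _ <= _)).
apply: measurable_fun_ler => //; apply: measurableT_comp => //.
exact: measurable_funB.
Qed.

(* [c >= 0] follows from [density_le] only when there is an index. *)
Let c_ge0 (i : 'I_n) : 0 <= c.
Proof.
have := le_trans (measure_ge0 P _) (@density_le i 0 1 ler01).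
by rewrite lee_fin subr0 mulr1.
Qed.

Let L_ge0 (i : 'I_n) : 0 <= L.
Proof. by rewrite mulr_ge0 ?(c_ge0 i) // addr_ge0 ?mulrn_wge0 ?ltW. Qed.

Lemma prob_grid_nbhd_le i k : (P (X i @^-1` grid_nbhd dl eps k) <= L%:E)%E.
Proof.
rewrite /grid_nbhd; case: pickle_inv => [z|]; last first.
  by rewrite measure0 lee_fin (L_ge0 i).
apply: le_trans; first by apply: density_le; have := eps_gt0; have := dl_gt0; lra.
rewrite lee_fin; apply: ler_wpM2l; first exact: c_ge0 i.
by rewrite intrD1 mulrDl mul1r mulr2n; lra.
Qed.

Lemma trivIset_preimage_grid_cell i :
  trivIset setT (fun k => X i @^-1` grid_cell dl k).
Proof.
move=> k k' _ _ [w [ck ck']].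
by apply: (trivIset_grid_cell _ dl_gt0 k k') => //; exists (X i w).
Qed.

(* Conditioned on the cell of X f, closeness to X f confines X e to an interval
   of length dl + 2 eps, independently of the other coordinates of the box. *)
Lemma boxI_close_le A e f : (forall i, measurable (A i)) -> A e = setT ->
  e != f -> (P (box A `&` close e f) <= L%:E * P (box A))%E.
Proof.
move=> mA Ae ef.
pose cut k i := if i == e then grid_nbhd dl eps k
                else if i == f then A f `&` grid_cell dl k else A i.
have mcut k i : measurable (cut k i).
  rewrite /cut /=; case: eqP => _; first exact: measurable_grid_nbhd.
  by case: eqP => _ //; apply: measurableI => //; exact: measurable_grid_cell.
apply: (measure_le_partition P (fun k => X f @^-1` grid_cell dl k)
  (fun k => box (cut k))).
- by move=> k; apply: measurable_preimage; exact: measurable_grid_cell.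
- exact: trivIset_preimage_grid_cell.
- by move=> k; exact: measurable_box.
- by apply: measurableI; [exact: measurable_box | exact: measurable_close].
- exact: measurable_box.
- exact: L_ge0 e.
- move=> w [Aw efw]; have [k cellk] := grid_cell_cover _ dl_gt0 (X f w).
  exists k => // i _; rewrite /cut /=; case: eqP => [->|_].
    by apply: grid_nbhdP cellk _.
  by case: eqP => [->|_]; [split|]; try exact: Aw.
move=> k /=; have -> : P (box (cut k)) = (P (X e @^-1` grid_nbhd dl eps k) *
    P (box (fun i => if i == f then A f `&` grid_cell dl k else A i)))%E.
  apply: box_prob_with => //; last by rewrite (negPf ef).
  - move=> i; case: eqP => _ //.
    by apply: measurableI => //; exact: measurable_grid_cell.
  - exact: measurable_grid_nbhd.
by rewrite box_with_setI lee_wpmul2r ?prob_grid_nbhd_le.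
Qed.

Lemma closeI_close_le i j k l : i != j -> i != k -> i != l -> k != l ->
  (P (close i j `&` close k l) <= (L * L)%:E)%E.
Proof.
move=> ij ik il kl.
pose cut m u := if u == l then grid_nbhd dl eps m
                else if u == k then grid_cell dl m else setT.
have mcut m u : measurable (cut m u).
  rewrite /cut; case: eqP => _; first exact: measurable_grid_nbhd.
  by case: eqP => _ //; exact: measurable_grid_cell.
rewrite -[leRHS]mule1 -(probability_setT P).
apply: (measure_le_partition P (fun m => X k @^-1` grid_cell dl m)
  (fun m => box (cut m) `&` close i j)).
- by move=> m; apply: measurable_preimage; exact: measurable_grid_cell.
- exact: trivIset_preimage_grid_cell.
- by move=> m; apply: measurableI; [exact: measurable_box|exact: measurable_close].
- by apply: measurableI; exact: measurable_close.
- by [].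
- by rewrite mulr_ge0 ?(L_ge0 i).
- move=> w [ijw klw]; have [m cellm] := grid_cell_cover _ dl_gt0 (X k w).
  exists m => //; split=> // u _; rewrite /cut; case: eqP => [->|_].
    by apply: grid_nbhdP cellm _; rewrite distrC.
  by case: eqP => [->|].
move=> m /=; apply: le_trans.
  by apply: boxI_close_le => //; rewrite /cut (negPf il) (negPf ik).
have -> : P (box (cut m)) = (P (X l @^-1` grid_nbhd dl eps m) *
    P (box (fun u => if u == k then grid_cell dl m else setT)))%E.
  apply: box_prob_with => //; last by rewrite eq_sym (negPf kl).
  - by move=> u; case: eqP => _ //; exact: measurable_grid_cell.
  - exact: measurable_grid_nbhd.
have -> : P (box (fun u => if u == k then grid_cell dl m else setT)) =
    (P (X k @^-1` grid_cell dl m) * P (box (fun=> setT)))%E.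
  by apply: box_prob_with => //; exact: measurable_grid_cell.
rewrite box_setT probability_setT mule1 setIT [in leRHS]EFinM -muleA.
by rewrite lee_wpmul2l ?lee_fin ?(L_ge0 i) // lee_wpmul2r ?prob_grid_nbhd_le.
Qed.

Lemma measurable_clustered i j k l :
  measurable [set w | clustered eps (X i w) (X j w) (X k w) (X l w)].
Proof.
rewrite -[X in measurable X]setTI -(preimage_true (fun w => clustered _ _ _ _ _)).
have mdist u v : measurable_fun setT (fun w => `|X u w - X v w| <= eps).
  apply: measurable_fun_ler => //; apply: measurableT_comp => //.
  exact: measurable_funB.
have mneq u v : measurable_fun setT (fun w => X u w != X v w).
  by apply: measurable_neg; exact: measurable_fun_eqr.
by repeat apply: measurable_and.
Qed.

Lemma prob_clustered_le i j k l :
  (P [set w | clustered eps (X i w) (X j w) (X k w) (X l w)] <= (L * L)%:E)%E.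
Proof.
have [/and4P[ij ik il kl]|] := boolP [&& i != j, i != k, i != l & k != l].
  apply: le_trans; last exact: closeI_close_le ij ik il kl.
  apply: le_measure; rewrite ?inE; first exact: measurable_clustered.
    by apply: measurableI; exact: measurable_close.
  by move=> w /and5P[_ _ _ _ /and3P[_ ? ?]].
move=> nd; rewrite (_ : [set w | _] = set0) ?measure0 ?lee_fin.
  by apply: mulr_ge0; exact: L_ge0 i.
apply/seteqP; split=> // w /and5P[xij xik xil _ /and3P[xkl _ _]].
apply: (negP nd).
have neq u v : X u w != X v w -> u != v by apply: contraNneq => ->.
by rewrite !neq.
Qed.

Lemma prob_not_spreaded_le :
  (P [set w | ~ spreaded eps [set X i w | i in [set: 'I_n]]] <=
   ((n ^ 4)%:R * (L * L))%:E)%E.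
Proof.
pose Q (t : 'I_n * 'I_n * 'I_n * 'I_n) :=
  [set w | clustered eps (X t.1.1.1 w) (X t.1.1.2 w) (X t.1.2 w) (X t.2 w)].
have -> : [set w | ~ spreaded eps [set X i w | i in [set: 'I_n]]] =
    \bigcup_t Q t.
  apply/seteqP; split=> w /=.
  - case/not_spreadedP=> y1 [y2 [y3 [y4 [[[i _ <-] [j _ <-] [k _ <-] [l _ <-]]]]]].
    move=> clu.
    by exists (i, j, k, l).
  - move=> [[[[i j] k] l] _ clu]; apply/not_spreadedP.
    by exists (X i w), (X j w), (X k w), (X l w); split=> //; split; eexists.
apply: le_trans.
  by apply: measure_fin_bigcup_le => t;
    [exact: measurable_clustered | exact: prob_clustered_le].
by rewrite !card_prod card_ord !expnS expn0 muln1 !mulnA.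
Qed.

End independent_variables.

Lemma mutually_independent_comp {R : realType} {d : measure_display}
    {T : measurableType d} (P : probability T R) {n : nat}
    (g : 'I_n -> T -> R) (h : 'I_n -> R -> R) :
  (forall i, measurable_fun setT (h i)) -> mutually_independent P g ->
  mutually_independent P (fun i => h i \o g i).
Proof.
move=> mh indep J A mA; apply: (indep J (fun i => h i @^-1` A i)) => i.
by rewrite -[X in measurable X]setTI; exact: mh.
Qed.

Lemma normal_prob_itv_le {R : realType} (m s a b : R) : s != 0 -> a <= b ->
  (normal_prob m s `[a, b] <= (normal_peak s * (b - a))%:E)%E.
Proof.
move=> s0 ab; rewrite /normal_prob.
apply: (@le_trans _ _
  (\int[lebesgue_measure]_(x in `[a, b]) (normal_peak s)%:E)%E).
  apply: ge0_le_integral => //.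
  - by move=> x _; rewrite lee_fin normal_pdf_ge0.
  - apply/measurable_EFinP; apply: measurable_funTS; exact: measurable_normal_pdf.
  - by move=> x _; rewrite lee_fin normal_pdf_ub.
rewrite integral_cst //= lebesgue_measure_itv /=; case: ifP => _.
  by rewrite -EFinD -EFinM.
by rewrite mule0 lee_fin mulr_ge0 ?normal_peak_ge0 ?subr_ge0.
Qed.

Lemma sqr_normal_peak_le {R : realType} (s eps : R) : 0 < s ->
  (normal_peak s * (eps / 2 + eps *+ 2)) ^+ 2 <= 2 * eps ^+ 2 / s ^+ 2.
Proof.
move=> s0; rewrite /normal_peak exprMn exprVn sqr_sqrtr; last first.
  by rewrite mulrn_wge0 // mulr_ge0 ?sqr_ge0 ?pi_ge0.
have s2 : 0 < s ^+ 2 by exact: exprn_gt0.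
have -> : (eps / 2 + eps *+ 2) ^+ 2 = 25 / 4 * eps ^+ 2 by rewrite mulr2n; field.
rewrite mulrC ler_pdivrMr ?mulrn_wgt0 ?mulr_gt0 ?pi_gt0 //.
have -> : 2 * eps ^+ 2 / s ^+ 2 * (s ^+ 2 * pi *+ 2) = 4 * pi * eps ^+ 2.
  by rewrite mulr2n; field; rewrite gt_eqF.
have := pi_ge2 R; have := sqr_ge0 eps; nra.
Qed.

Lemma prob_shift_itv_le {R : realType} {d : measure_display}
    {T : measurableType d} (P : probability T R) (g : T -> R) (m sigma a b : R) :
  0 < sigma -> (forall A, measurable A -> P (g @^-1` A) = normal_prob 0 sigma A) ->
  a <= b ->
  (P ((fun w => (m + g w)%R) @^-1` `[a, b]) <= (normal_peak sigma * (b - a))%:E)%E.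
Proof.
move=> sigma_gt0 law_g ab.
have -> : (fun w => m + g w) @^-1` `[a, b] = g @^-1` `[a - m, b - m].
  by apply/seteqP; split=> w; rewrite /= !in_itv /= => /andP[? ?];
    apply/andP; split; lra.
rewrite law_g // (_ : b - a = b - m - (a - m)); last by rewrite opprB addrA subrK.
by apply: normal_prob_itv_le; rewrite ?gt_eqF ?lerB.
Qed.

Theorem lemma20 (R : realType) (d : measure_display) (T : measurableType d)
  (P : probability T R) (n : nat) (sigma : R) (mu : 'I_n -> R)
  (g : 'I_n -> T -> R) :
  0 < sigma ->
  (forall i, 0 <= mu i <= 1) ->
  (forall i, measurable_fun setT (g i)) ->
  (forall i (A : set R), measurable A ->
     P (g i @^-1` A) = normal_prob 0 sigma A) ->
  mutually_independent P g ->
  forall eps : R, 0 < eps ->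
  (P [set w : T | ~ spreaded eps [set (mu i + g i w)%R | i in [set: 'I_n]]]
     <= ((2 * (n%:R) ^+ 4 * eps ^+ 2) / sigma ^+ 2)%:E)%E.
Proof.
(* The bound does not use the hypothesis 0 <= mu i <= 1. *)
move=> sigma_gt0 _ mg law_g indep_g eps eps_gt0.
pose X i w := mu i + g i w.
have mX i : measurable_fun setT (X i) by exact: measurable_funD.
have mshift i : measurable_fun setT (fun y => mu i + y) by exact: measurable_funD.
have indepX : mutually_independent P X.
  exact: (mutually_independent_comp P g _ mshift indep_g).
have densityX i a b : a <= b ->
    (P (X i @^-1` `[a, b]) <= (normal_peak sigma * (b - a))%:E)%E.
  exact: prob_shift_itv_le sigma_gt0 (law_g i).
have e2 : 0 < eps / 2 by rewrite divr_gt0.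
apply: le_trans (prob_not_spreaded_le P X mX indepX _ densityX _ _ eps_gt0 e2) _.
have -> : 2 * n%:R ^+ 4 * eps ^+ 2 / sigma ^+ 2 =
    n%:R ^+ 4 * (2 * eps ^+ 2 / sigma ^+ 2) by ring.
rewrite lee_fin -expr2 natrX ler_wpM2l ?exprn_ge0 //.
exact: sqr_normal_peak_le.
Qed.
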